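(* Let $n\ge 1$ and let $F:\mathbb{F}_{2^n}\to\mathbb{F}_{2^n}$ be any function, identified with its associated polynomial $F(X)$ over $\mathbb{F}_{2^n}$. Then $$\sum_{b\in \mathbb{F}_{2^n}^*}\ \sum_{v_1,v_2\in \mathbb{F}_{2^n}}W_F(bv_1,v_1)\,W_F(bv_2,v_2)\,W_F(b(v_1+v_2),v_1+v_2)\;+\;2^{n+2}\sum_{v\in \mathbb{F}_{2^n}^*}W_F^2(0,v)\;-\;2^{4n+2}\;+\;2^{3n+2}\;\ge\; 0,$$ and equality holds if and only if $F$ is an o-polynomial.
   Context: For a positive integer $n$, $tr_n:\mathbb{F}_{2^n}\to\mathbb{F}_2$ denotes the absolute trace $tr_n(x)=x+x^2+x^{2^2}+\cdots+x^{2^{n-1}}$, and $\mathbb{F}_{2^n}^*=\mathbb{F}_{2^n}\setminus\{0\}$. For $F:\mathbb{F}_{2^n}\to\mathbb{F}_{2^n}$ and $(u,v)\in\mathbb{F}_{2^n}^2$, the Walsh transform is $W_F(u,v)=\sum_{x\in\mathbb{F}_{2^n}}(-1)^{tr_n(vF(x))+tr_n(ux)}$ (an integer). In the projective plane $PG(2,2^n)$ (points = 1-dimensional subspaces of $\mathbb{F}_{2^n}^3$, lines = 2-dimensional subspaces, incidence = inclusion), a hyperoval is a set of $2^n+2$ points no three of which lie on a common line. A function (polynomial) $F$ over $\mathbb{F}_{2^n}$ is an o-polynomial if the set $\{(1,t,F(t)) : t\in\mathbb{F}_{2^n}\}\cup\{(0,1,0),(0,0,1)\}$ is a hyperoval of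 $PG(2,2^n)$. Equivalently (known fact), $F$ is an o-polynomial if and only if for every $a\in\mathbb{F}_{2^n}$ and every $b\in\mathbb{F}_{2^n}^*$ the equation $F(x)+bx=a$ has either $0$ or $2$ solutions $x\in\mathbb{F}_{2^n}$; in that case $F$ is a permutation of $\mathbb{F}_{2^n}$. *)

From HB Require Import structures.
From mathcomp Require Import all_boot all_order all_algebra all_fingroup all_field.
Set Implicit Arguments. Unset Strict Implicit. Unset Printing Implicit Defensive.
Import Order.TTheory GRing.Theory Num.Theory.
Local Open Scope ring_scope.

Section Defs.
Variable K : finFieldType.

Definition abs_trace (n : nat) (x : K) : K := \sum_(i < n) x ^+ (2 ^ i).

(* (-1)^t for t in F_2 (embedded in K as 0 or 1) *)
Definition sign2 (t : K) : int := if t == 0 then 1 else -1.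

Definition walsh (n : nat) (F : K -> K) (u v : K) : int :=
  \sum_(x : K) sign2 (abs_trace n (v * F x) + abs_trace n (u * x)).

(* Projective plane PG(2,K): a point is the row space of a nonzero vector of
   K^3, a line is a 2-dimensional subspace (row space of a rank-2 matrix),
   incidence is inclusion. *)
Definition row3 (a b c : K) : 'rV[K]_3 :=
  \row_(i < 3) (if (i : nat) == 0%N then a else if (i : nat) == 1%N then b else c).

Definition pg_collinear (p q r : 'rV[K]_3) : Prop :=
  exists L : 'M[K]_3, [/\ \rank L = 2%N, (p <= L)%MS, (q <= L)%MS & (r <= L)%MS].

Definition opoints (F : K -> K) : seq 'rV[K]_3 :=
  [seq row3 1 t (F t) | t <- enum K] ++ [:: row3 0 1 0; row3 0 0 1].

Definition o_polynomial (F : K -> K) : Prop :=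
  forall p q r, p \in opoints F -> q \in opoints F -> r \in opoints F ->
    ~~ (p == q)%MS -> ~~ (p == r)%MS -> ~~ (q == r)%MS ->
    ~ pg_collinear p q r.

End Defs.

(* Write N_b(a) for the number of solutions of F(x) + bx = a, so that
   W_F(bv, v) = sum_x (-1)^tr(v (F(x) + bx)). Orthogonality of the additive character
   x |-> (-1)^tr(x) gives sum_v W_F(bv, v) (-1)^tr(vc) = 2^n N_b(c); hence the double sum over
   (v1, v2) equals 2^(2n) sum_a N_b(a)^3 and sum_v W_F(bv, v)^2 = 2^n sum_a N_b(a)^2. Two distinct
   x, z share a fibre for exactly one slope b, so sum_b sum_a N_b(a)^2 = 2^(2n+1) - 2^n, and the
   left-hand side equals
     2^(2n) (sum_(b <> 0) sum_a N_b(a) (N_b(a) - 1) (N_b(a) - 2) + sum_a N_0(a) (N_0(a) - 1)).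
   This is nonnegative and vanishes iff F is injective and no equation F(x) + bx = a with b <> 0
   has three solutions. Computing 3x3 determinants, that is exactly the condition that no three
   of the points (1, t, F t), (0, 1, 0), (0, 0, 1) are collinear. *)

From HB Require Import structures.
From mathcomp Require Import all_boot all_order all_algebra all_fingroup all_field.
From mathcomp Require Import ring.
Import Order.TTheory GRing.Theory Num.Theory.
Local Open Scope ring_scope.
Set Implicit Arguments. Unset Strict Implicit. Unset Printing Implicit Defensive.

Lemma natr_ffact2 (R : comPzRingType) k : (k ^_ 2)%:R = k%:R ^+ 2 - k%:R :> R.
Proof.
case: k => [|k]; first by rewrite ffact0n /=; ring.
by rewrite ffactSS ffactn1 natrM -[k.+1]addn1 natrD; ring.
Qed.

Lemma natr_ffact3 (R : comPzRingType) k :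
  (k ^_ 3)%:R = k%:R ^+ 3 - 3%:R * k%:R ^+ 2 + 2%:R * k%:R :> R.
Proof.
case: k => [|k]; first by rewrite ffact0n /=; ring.
by rewrite ffactSS natrM natr_ffact2 -[k.+1]addn1 natrD; ring.
Qed.

Lemma sum_fibres (I J : finType) (R : nmodType) (g : I -> J) (f : J -> R) :
  \sum_i f (g i) = \sum_j f j *+ #|[pred i | g i == j]|.
Proof.
rewrite (partition_big g xpredT) //=; apply: eq_bigr => j _.
by rewrite -sumr_const; apply: eq_big => [i|i /eqP ->]; rewrite ?inE.
Qed.

Lemma natr_card (I : finType) (R : pzSemiRingType) (P : pred I) :
  #|[pred i | P i]|%:R = \sum_i (P i)%:R :> R.
Proof.
rewrite -sum1_card natr_sum big_mkcond.
by apply: eq_bigr => i _; rewrite inE; case: (P i).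
Qed.

Lemma eq0_of_sqr_eq0 (R : idomainType) (x y : R) : y = 0 -> y ^+ 2 = x ^+ 2 -> x = 0.
Proof. by move=> -> /esym/eqP; rewrite expr0n sqrf_eq0 => /eqP. Qed.

Section Fibres.
Variables (K : finFieldType) (F : K -> K).
Local Notation N := (#|K|%:R : int).

Definition F_b (b x : K) := F x + b * x.
Definition nsol (b a : K) : nat := #|[pred x | F_b b x == a]|.

Lemma sum_F_b (R : nmodType) b (f : K -> R) :
  \sum_x f (F_b b x) = \sum_a f a *+ nsol b a.
Proof. exact: sum_fibres. Qed.

Lemma sum_nsol b : \sum_a (nsol b a)%:R = N.
Proof. by have := sum_F_b b (fun _ => 1 : int); rewrite sumr_const. Qed.

Lemma F_b_eq_slope b x z : x != z ->
  (F_b b x == F_b b z) = (b == (F z - F x) / (x - z)).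
Proof.
move=> xz; have dnz : x - z != 0 by rewrite subr_eq0.
rewrite -[RHS](inj_eq (mulIf dnz)) /= divfK // -subr_eq0 -[RHS]subr_eq0 /F_b.
by congr (_ == 0); ring.
Qed.

Lemma sum_nsol_sq : \sum_b \sum_a (nsol b a)%:R ^+ 2 = 2%:R * N ^+ 2 - N :> int.
Proof.
have pairs b : \sum_a (nsol b a)%:R ^+ 2 = \sum_z \sum_x (F_b b x == F_b b z)%:R :> int.
  transitivity (\sum_a (nsol b a)%:R *+ nsol b a : int).
    by apply: eq_bigr => a _; rewrite expr2 mulr_natr.
  by rewrite -sum_F_b; apply: eq_bigr => z _; apply: natr_card.
under eq_bigr do rewrite pairs.
rewrite exchange_big /=; under eq_bigr do rewrite exchange_big /=.
have one_slope z x : x != z -> \sum_b (F_b b x == F_b b z)%:R = 1 :> int.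
  move=> xz; under eq_bigr do rewrite F_b_eq_slope //.
  by rewrite (bigD1 ((F z - F x) / (x - z))) //= eqxx big1 ?addr0 // => b /negbTE ->.
have pairs_at z : \sum_x \sum_b (F_b b x == F_b b z)%:R = N + (N - 1) :> int.
  rewrite (bigD1 z) //= (eq_bigr (fun _ => 1)) => [|b _]; last by rewrite eqxx.
  rewrite sumr_const (eq_bigr (fun _ => 1)) => [|x]; last exact: one_slope.
  have K_gt0 : (0 < #|K|)%N by apply/card_gt0P; exists 0.
  rewrite sumr_const cardC1 cardT -cardE; case: #|K| K_gt0 => // k _ /=.
  by rewrite -natr1; ring.
by rewrite (eq_bigr _ (fun z _ => pairs_at z)) sumr_const; ring.
Qed.

Definition solution_excess : nat :=
  (\sum_(b | b != 0%R) \sum_a nsol b a ^_ 3 + \sum_a nsol 0%R a ^_ 2)%N.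

Definition bounded_solutions : Prop :=
  (forall a, nsol 0%R a <= 1)%N /\ (forall b a, b != 0%R -> nsol b a <= 2)%N.

Lemma solution_excess_eq0 : solution_excess = 0%N <-> bounded_solutions.
Proof.
have ffact_eq0 k m : (k ^_ m == 0)%N = (k < m)%N by rewrite eqn0Ngt ffact_gt0 -ltnNge.
rewrite /solution_excess /bounded_solutions; split.
  move/eqP; rewrite addn_eq0 !sum_nat_eq0 => /andP[/forall_inP excess3 /forallP excess2].
  split=> [a | b a b_neq0]; first by have /= := excess2 a; rewrite -ltnS -ffact_eq0.
  by have := excess3 b b_neq0; rewrite sum_nat_eq0 => /forallP/(_ a); rewrite ffact_eq0.
move=> [bound0 bound]; apply/eqP; rewrite addn_eq0 !sum_nat_eq0.
apply/andP; split; last by apply/forallP => a /=; rewrite ffact_eq0 ltnS bound0.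
apply/forall_inP => b b_neq0; rewrite sum_nat_eq0; apply/forallP => a.
by rewrite /= ffact_eq0 ltnS bound.
Qed.
End Fibres.

Section AdditiveCharacter.
Variables (K : finFieldType) (chi : K -> int).
Hypotheses (hchar : 2%N \in [pchar K]) (chi0 : chi 0 = 1)
  (chiD : {morph chi : x y / x + y >-> x * y}) (chi_nontriv : exists w, chi w != 1).
Local Notation N := (#|K|%:R : int).

Lemma sum_char : \sum_x chi x = 0.
Proof.
have [w chi_w] := chi_nontriv.
have shift : (\sum_x chi x) * chi w = \sum_x chi x.
  by rewrite mulr_suml [RHS](reindex_inj (addIr w)); apply: eq_bigr => x _; rewrite chiD.
apply: (mulIf (x := chi w - 1)); first by rewrite subr_eq0.
by rewrite mul0r mulrBr mulr1 shift subrr.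
Qed.

Lemma sum_char_mul c : \sum_v chi (v * c) = N * (c == 0)%:R.
Proof.
have [->|cnz] := eqVneq c 0.
  by under eq_bigr do rewrite mulr0 chi0; rewrite sumr_const mulr1.
by rewrite mulr0 -[RHS]sum_char [RHS](reindex_inj (mulIf cnz)).
Qed.

Lemma sum_char_orth a c : \sum_v chi (v * a) * chi (v * c) = N * (a == c)%:R.
Proof.
under eq_bigr do rewrite -chiD -mulrDr.
by rewrite sum_char_mul addr_eq0 oppr_pchar2.
Qed.

Variable F : K -> K.

Definition walsh_b (b v : K) : int := \sum_x chi (v * F_b F b x).

Lemma sum_walsh_b_char b c : \sum_v walsh_b b v * chi (v * c) = N * (nsol F b c)%:R.
Proof.
under eq_bigr do rewrite mulr_suml.
rewrite exchange_big /=; under eq_bigr do rewrite sum_char_orth.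
by rewrite -mulr_sumr -natr_card.
Qed.

Lemma sum_walsh_b_sq b : \sum_v walsh_b b v ^+ 2 = N * \sum_a (nsol F b a)%:R ^+ 2.
Proof.
under eq_bigr do rewrite expr2 {2}/walsh_b mulr_sumr.
rewrite exchange_big /= (eq_bigr _ (fun z _ => sum_walsh_b_char b _)).
rewrite (sum_F_b F b (fun a => N * (nsol F b a)%:R)) mulr_sumr.
by apply: eq_bigr => a _; rewrite -mulr_natr; ring.
Qed.

Lemma sum_walsh_b_cube b :
  \sum_v1 \sum_v2 walsh_b b v1 * walsh_b b v2 * walsh_b b (v1 + v2)
  = N ^+ 2 * \sum_a (nsol F b a)%:R ^+ 3.
Proof.
have split_last v1 v2 : walsh_b b v1 * walsh_b b v2 * walsh_b b (v1 + v2) =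
    \sum_z (walsh_b b v1 * chi (v1 * F_b F b z)) * (walsh_b b v2 * chi (v2 * F_b F b z)).
  rewrite [X in _ * X]/walsh_b mulr_sumr; apply: eq_bigr => z _.
  by rewrite mulrDl chiD; ring.
under eq_bigr do under eq_bigr do rewrite split_last.
under eq_bigr do rewrite exchange_big /=.
rewrite exchange_big /=.
under eq_bigr do rewrite -big_distrlr /= !sum_walsh_b_char.
rewrite (sum_F_b F b (fun a => N * (nsol F b a)%:R * (N * (nsol F b a)%:R))) mulr_sumr.
by apply: eq_bigr => a _; rewrite -mulr_natr; ring.
Qed.

Lemma walsh_b_identity :
  \sum_(b | b != 0) \sum_v1 \sum_v2 walsh_b b v1 * walsh_b b v2 * walsh_b b (v1 + v2)
  + 4%:R * N * \sum_(v | v != 0) walsh_b 0 v ^+ 2 - 4%:R * N ^+ 4 + 4%:R * N ^+ 3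
  = N ^+ 2 * (solution_excess F)%:R.
Proof.
have walsh_00 : walsh_b 0 0 = N.
  by rewrite /walsh_b; under eq_bigr do rewrite mul0r chi0; rewrite sumr_const.
have sq0 : \sum_(v | v != 0) walsh_b 0 v ^+ 2 = N * \sum_a (nsol F 0 a)%:R ^+ 2 - N ^+ 2.
  by rewrite -sum_walsh_b_sq [in RHS](bigD1 0) //= walsh_00 addrC addrK.
have sum1 : \sum_(b | b != 0) \sum_a (nsol F b a)%:R = N ^+ 2 - N.
  have total : \sum_b \sum_a (nsol F b a)%:R = N ^+ 2 :> int.
    by rewrite (eq_bigr _ (fun b _ => sum_nsol F b)) sumr_const -(mulr_natr N) expr2.
  by move: total; rewrite [in LHS](bigD1 0) //= sum_nsol => <-; rewrite addrC addrK.
have sum2 : \sum_(b | b != 0) \sum_a (nsol F b a)%:R ^+ 2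
    = 2%:R * N ^+ 2 - N - \sum_a (nsol F 0 a)%:R ^+ 2.
  by rewrite -(sum_nsol_sq F) [in RHS](bigD1 0) //=; ring.
have excess3 : \sum_(b | b != 0) ((\sum_a nsol F b a ^_ 3)%:R : int)
    = \sum_(b | b != 0) \sum_a (nsol F b a)%:R ^+ 3
      - 3%:R * \sum_(b | b != 0) \sum_a (nsol F b a)%:R ^+ 2
      + 2%:R * \sum_(b | b != 0) \sum_a (nsol F b a)%:R.
  rewrite !mulr_sumr -sumrB -big_split /=; apply: eq_bigr => b _.
  rewrite natr_sum !mulr_sumr -sumrB -big_split /=; apply: eq_bigr => a _.
  exact: natr_ffact3.
have excess2 : ((\sum_a nsol F 0%R a ^_ 2)%:R : int)
    = \sum_a (nsol F 0 a)%:R ^+ 2 - \sum_a (nsol F 0 a)%:R.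
  by rewrite natr_sum -sumrB; apply: eq_bigr => a _; exact: natr_ffact2.
rewrite /solution_excess natrD natr_sum excess3 excess2 sum1 sum2 sum_nsol sq0.
under eq_bigr do rewrite sum_walsh_b_cube.
rewrite -mulr_sumr; ring.
Qed.
End AdditiveCharacter.

Section TraceCharacter.
Variables (K : finFieldType) (n : nat).
Hypotheses (hn : (1 <= n)%N) (hK : #|K| = (2 ^ n)%N) (hchar : 2%N \in [pchar K]).

Lemma abs_traceD : {morph abs_trace n : x y / x + y :> K}.
Proof.
move=> x y; rewrite -big_split; apply: eq_bigr => i _.
by rewrite exprDn_pchar // pnatX (pnatE _ (pcharf_prime hchar)) hchar.
Qed.

Lemma abs_trace0 : abs_trace n (0 : K) = 0.
Proof. by rewrite /abs_trace big1 // => i _; rewrite expr0n expn_eq0. Qed.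

Lemma abs_trace_sqr (x : K) : abs_trace n x ^+ 2 = abs_trace n x.
Proof.
rewrite -(pFrobenius_autE hchar) rmorph_sum /abs_trace.
case: n hn hK => // m _ hKm; rewrite big_ord_recr big_ord_recl /=.
rewrite pFrobenius_autE -exprM -expnSr -hKm expf_card expn0 expr1 addrC.
by congr (_ + _); apply: eq_bigr => i _; rewrite pFrobenius_autE -exprM -expnSr.
Qed.

Lemma abs_trace_bool (x : K) : (abs_trace n x == 0) || (abs_trace n x == 1).
Proof.
have : abs_trace n x * (abs_trace n x - 1) == 0.
  by rewrite mulrBr mulr1 -expr2 abs_trace_sqr subrr.
by rewrite mulf_eq0 subr_eq0.
Qed.

Lemma abs_trace_neq0 : exists w : K, abs_trace n w != 0.
Proof.
(* Otherwise every element of K is a root of a nonzero polynomial of degree 2^(n-1) < #|K|. *)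
apply/existsP; rewrite -negb_forall; apply/negP => /forallP trace0.
pose P : {poly K} := \sum_(i < n) 'X^(2 ^ i).
have P_eval w : P.[w] = abs_trace n w.
  by rewrite /P horner_sum; apply: eq_bigr => i _; rewrite hornerXn.
have P_neq0 : P != 0.
  apply/eqP => /(congr1 (fun p : {poly K} => p`_1)); rewrite /P coef_sum coef0.
  case: n hn => // m _; rewrite big_ord_recl /= coefXn expn0 eqxx big1 ?addr0.
    by move/eqP; rewrite oner_eq0.
  by move=> i _; rewrite coefXn expnS; case: (2 ^ i)%N => [|k]; rewrite ?muln0 // mul2n doubleS.
have P_size : (size P <= (2 ^ n.-1).+1)%N.
  apply: (leq_trans (size_sum _ _ _)); apply/bigmax_leqP => i _.
  by rewrite size_polyXn ltnS leq_exp2l // -ltnS prednK.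
have := max_poly_roots P_neq0 _ (enum_uniq K).
have -> : all (root P) (enum K) by apply/allP => w _; rewrite /root P_eval trace0.
move=> /(_ isT); rewrite -cardE hK => roots_le; have := leq_trans roots_le P_size.
by rewrite ltnS leq_exp2l //; case: (n) hn => //= m _; rewrite ltnn.
Qed.

Definition tr_char (x : K) : int := sign2 (abs_trace n x).

Lemma tr_char0 : tr_char 0 = 1.
Proof. by rewrite /tr_char abs_trace0 /sign2 eqxx. Qed.

Lemma tr_charD : {morph tr_char : x y / x + y >-> x * y}.
Proof.
move=> x y; rewrite /tr_char abs_traceD.
have one_neq0 : (1 : K) != 0 := oner_neq0 K.
have one_one : (1 : K) + 1 = 0 by rewrite addrr_pchar2.
case/orP: (abs_trace_bool x) => /eqP->; case/orP: (abs_trace_bool y) => /eqP->;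
  by rewrite /sign2 ?addr0 ?add0r ?one_one ?eqxx ?(negbTE one_neq0).
Qed.

Lemma tr_char_nontriv : exists w, tr_char w != 1.
Proof.
by have [w tr_w] := abs_trace_neq0; exists w; rewrite /tr_char /sign2 (negbTE tr_w).
Qed.

Lemma walsh_tr_char (F : K -> K) b v : walsh n F (b * v) v = walsh_b tr_char F b v.
Proof.
apply: eq_bigr => x _; rewrite -abs_traceD; congr sign2; congr abs_trace.
by rewrite /F_b mulrDr mulrCA mulrA.
Qed.
End TraceCharacter.

Section ProjectivePlane.
Variable K : finFieldType.
Implicit Types (p q r : 'rV[K]_3).

Definition rows3 p q r : 'M[K]_3 := \matrix_(i < 3) [:: p; q; r]`_i.

Lemma det_rows3 a1 b1 c1 a2 b2 c2 a3 b3 c3 :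
  \det (rows3 (row3 a1 b1 c1) (row3 a2 b2 c2) (row3 a3 b3 c3)) =
  a1 * (b2 * c3 - c2 * b3) - b1 * (a2 * c3 - c2 * a3) + c1 * (a2 * b3 - b2 * a3).
Proof.
rewrite (expand_det_row _ 0) !big_ord_recr big_ord0 /= add0r /cofactor.
rewrite !(expand_det_row _ 0) !big_ord_recr !big_ord0 /= !add0r /cofactor.
by rewrite !det_mx11 !mxE /=; ring.
Qed.

Lemma pg_collinear_det p q r : pg_collinear p q r -> \det (rows3 p q r) = 0.
Proof.
case=> L [rankL pL qL rL]; apply/eqP/negPn/negP => det_neq0.
have /eqP rank3 : row_free (rows3 p q r) by rewrite row_free_unit unitmxE unitfE.
have : (rows3 p q r <= L)%MS.
  by apply/row_subP => i; rewrite rowK; case: i => [[|[|[|]]]].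
by move/mxrankS; rewrite rank3 rankL.
Qed.

Lemma pg_collinear_span p q r : p != 0 -> q != 0 -> ~~ (p == q)%MS ->
  (r <= p + q)%MS -> pg_collinear p q r.
Proof.
move=> p_neq0 q_neq0 npq rS; exists (p + q)%MS; split; rewrite ?addsmxSl ?addsmxSr //.
apply/eqP; rewrite eqn_leq; apply/andP; split.
  by have := (mxrank_adds_leqif p q).1; rewrite !rank_rV p_neq0 q_neq0.
rewrite ltnNge; apply: contra npq => rank_le1.
have span_le (A : 'rV[K]_3) : A != 0 -> (A <= p + q)%MS -> (p + q <= A)%MS.
  move=> A_neq0 AS; rewrite -(mxrank_leqif_sup AS).2 eqn_leq mxrankS //=.
  by rewrite rank_rV A_neq0.
move: (span_le p p_neq0 (addsmxSl p q)) (span_le q q_neq0 (addsmxSr p q)).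
by rewrite !addsmx_sub => /andP[_ qp] /andP[pq _]; rewrite pq qp.
Qed.

Lemma row3_submx (a b c a' b' c' : K) : (row3 a b c <= row3 a' b' c')%MS ->
  exists k, [/\ a = k * a', b = k * b' & c = k * c'].
Proof.
case/sub_rVP => k e; exists k.
have entry i : row3 a b c 0 i = k * row3 a' b' c' 0 i by rewrite e mxE.
by move: (entry 0) (entry 1) (entry 2); rewrite !mxE.
Qed.

Lemma row3_comb (a b x1 y1 z1 x2 y2 z2 : K) :
  a *: row3 x1 y1 z1 + b *: row3 x2 y2 z2 =
  row3 (a * x1 + b * x2) (a * y1 + b * y2) (a * z1 + b * z2).
Proof. by apply/rowP => i; rewrite !mxE; case: ifP => _ //; case: ifP. Qed.
End ProjectivePlane.

Section Hyperoval.
Variables (K : finFieldType) (F : K -> K).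

Definition affine_pt (t : K) : 'rV[K]_3 := row3 1 t (F t).
Definition infty_y : 'rV[K]_3 := row3 0 1 0.
Definition infty_z : 'rV[K]_3 := row3 0 0 1.

Lemma opointsP p : p \in opoints F ->
  [\/ exists t, p = affine_pt t, p = infty_y | p = infty_z].
Proof.
rewrite mem_cat => /orP[/mapP[t _ ->]|]; first by apply: Or31; exists t.
by rewrite !inE => /orP[] /eqP ->; [apply: Or32 | apply: Or33].
Qed.

Lemma affine_pt_in t : affine_pt t \in opoints F.
Proof. by rewrite mem_cat map_f ?mem_enum. Qed.

Lemma infty_y_in : infty_y \in opoints F.
Proof. by rewrite mem_cat !inE eqxx !orbT. Qed.

Lemma affine_pt_neq0 t : affine_pt t != 0.
Proof. by apply/eqP => /rowP/(_ 0); rewrite !mxE; apply/eqP; rewrite oner_eq0. Qed.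

Lemma eqmx_affine_pt t s : (affine_pt t == affine_pt s)%MS = (t == s).
Proof.
apply/idP/eqP => [/andP[/row3_submx[k [k1 ts _]] _] | ->]; last by rewrite submx_refl.
by move: k1; rewrite ts mulr1 => <-; rewrite mul1r.
Qed.

Lemma affine_pt_infty_y t : ~~ (affine_pt t == infty_y)%MS.
Proof.
by apply/negP => /andP[/row3_submx[k [k0 _ _]] _]; move: (oner_neq0 K); rewrite k0 mulr0 eqxx.
Qed.

Lemma o_polynomial_bounded : o_polynomial F -> bounded_solutions F.
Proof.
move=> hyperoval; split=> [a | b a b_neq0].
  rewrite leqNgt; apply/negP => /card_gt1P[x [y [/eqP Fx /eqP Fy xy]]].
  have yx : y - x != 0 by rewrite subr_eq0 eq_sym.
  apply: (hyperoval _ _ _ (affine_pt_in x) (affine_pt_in y) infty_y_in);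
    rewrite ?eqmx_affine_pt ?affine_pt_infty_y //.
  apply: pg_collinear_span; rewrite ?affine_pt_neq0 ?eqmx_affine_pt //.
  apply/sub_addsmxP; exists ((- (y - x)^-1)%:M, (y - x)^-1%:M) => /=.
  rewrite !mul_scalar_mx /affine_pt /infty_y row3_comb.
  move: Fx Fy; rewrite /F_b !mul0r !addr0 => -> ->.
  by congr row3; field.
rewrite leqNgt; apply/negP => /card_gt2P[x [y [z [[/eqP Fx /eqP Fy /eqP Fz] [xy yz zx]]]]].
have yx : y - x != 0 by rewrite subr_eq0 eq_sym.
apply: (hyperoval _ _ _ (affine_pt_in x) (affine_pt_in y) (affine_pt_in z));
  rewrite ?eqmx_affine_pt // 1?eq_sym //.
apply: pg_collinear_span; rewrite ?affine_pt_neq0 ?eqmx_affine_pt //.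
apply/sub_addsmxP; exists ((1 - (z - x) / (y - x))%:M, ((z - x) / (y - x))%:M) => /=.
rewrite !mul_scalar_mx /affine_pt row3_comb.
have FE w : F_b F b w = a -> F w = a - b * w by rewrite /F_b => <-; ring.
by rewrite (FE _ Fx) (FE _ Fy) (FE _ Fz); congr row3; field.
Qed.

Section BoundedSolutions.
Hypothesis bounded : bounded_solutions F.

Lemma bounded_injective : injective F.
Proof.
move=> x y Fxy; apply/eqP; apply/negPn/negP => xy.
have := bounded.1 (F x); rewrite leqNgt => /negP; apply; apply/card_gt1P.
by exists x, y; rewrite !inE /F_b !mul0r !addr0 Fxy eqxx.
Qed.

Lemma bounded_affine_noncollinear t s u : t != s -> t != u -> s != u ->
  (s - t) * (F u - F t) - (u - t) * (F s - F t) != 0.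
Proof.
move=> ts tu su; apply/negP => collinear.
have st : s - t != 0 by rewrite subr_eq0 eq_sym.
have ut : u - t != 0 by rewrite subr_eq0 eq_sym.
pose b := (F t - F s) / (s - t).
have b_neq0 : b != 0.
  rewrite mulf_eq0 invr_eq0 negb_or st andbT subr_eq0.
  by apply: contraNneq ts => /bounded_injective ->.
have Fs : F_b F b s == F_b F b t by rewrite F_b_eq_slope // eq_sym.
have Fu : F_b F b u == F_b F b t.
  rewrite F_b_eq_slope ?(eq_sym u) // eqr_div //; apply/eqP.
  by apply: subr0_eq; rewrite -(eqP collinear); ring.
have := bounded.2 b (F_b F b t) b_neq0; rewrite leqNgt => /negP; apply; apply/card_gt2P.
by exists t, s, u; rewrite !inE Fs Fu eqxx (eq_sym u).
Qed.

Lemma bounded_o_polynomial : o_polynomial F.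
Proof.
move=> p q r /opointsP hp /opointsP hq /opointsP hr + + + /pg_collinear_det.
case: hp => [[t ->]|->|->]; case: hq => [[s ->]|->|->]; case: hr => [[u ->]|->|->];
  rewrite ?submx_refl // ?eqmx_affine_pt det_rows3 => npq npr nqr det0.
(* Unless the three points are affine, the determinant is, up to sign, 1, t - s or F t - F s
   for two of the parameters t, s. *)
all: first
  [ by move/negP: (bounded_affine_noncollinear npq npr nqr); apply; apply/eqP;
      rewrite -det0; ring
  | by (move/eqP: (oner_neq0 K) + move/eqP: npq + move/eqP: npr + move/eqP: nqr); apply;
      (idtac + apply: bounded_injective); try apply: subr0_eq;
      apply: (eq0_of_sqr_eq0 det0); ring ].
Qed.
End BoundedSolutions.
End Hyperoval.

Lemma o_polynomialP (K : finFieldType) (F : K -> K) :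
  o_polynomial F <-> bounded_solutions F.
Proof. by split; [exact: o_polynomial_bounded | exact: bounded_o_polynomial]. Qed.

Theorem theorem2 (K : finFieldType) (n : nat) (F : K -> K)
    (hn : (1 <= n)%N) (hK : #|K| = (2 ^ n)%N) (hchar : 2%N \in [pchar K]) :
  let S : int :=
    \sum_(b : K | b != 0) \sum_(v1 : K) \sum_(v2 : K)
        walsh n F (b * v1) v1 * walsh n F (b * v2) v2
          * walsh n F (b * (v1 + v2)) (v1 + v2)
    + (2 ^ (n + 2))%:Z * \sum_(v : K | v != 0) walsh n F 0 v ^+ 2
    - (2 ^ (4 * n + 2))%:Z + (2 ^ (3 * n + 2))%:Z in
  0 <= S /\ (S = 0 <-> o_polynomial F).
Proof.
move=> S.
have pow2 k : (2 ^ (k * n + 2))%:Z = 4%:R * #|K|%:R ^+ k.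
  by rewrite -natz hK -natrX -natrM expnD (mulnC k) expnM mulnC.
have S_excess : S = #|K|%:R ^+ 2 * (solution_excess F)%:R.
  rewrite -(walsh_b_identity hchar (tr_char0 K n) (tr_charD hn hK hchar)
             (tr_char_nontriv hn hK)).
  rewrite /S -[n in (2 ^ (n + 2))%N]mul1n !pow2 expr1.
  congr (_ + _ * _ - _ + _).
    apply: eq_bigr => b _; apply: eq_bigr => v1 _; apply: eq_bigr => v2 _.
    by rewrite !walsh_tr_char.
  by apply: eq_bigr => v _; rewrite -[X in walsh n F X](mul0r v) walsh_tr_char.
have N2_neq0 : (#|K|%:R : int) ^+ 2 != 0 by rewrite expf_neq0 // pnatr_eq0 hK expn_eq0.
split; first by rewrite S_excess mulr_ge0 ?exprn_ge0.
rewrite S_excess o_polynomialP -solution_excess_eq0; split=> [/eqP | ->]; last by rewrite mulr0.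
by rewrite mulf_eq0 (negbTE N2_neq0) pnatr_eq0 => /eqP.
Qed.
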